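(* Let $p\ge 2$ be an integer and $\eta>0$. Then the function $\tau_\ell^-$ is strictly decreasing on $[0,1]$.
   Context: For an integer $p\ge 2$ and a real parameter $\eta>-1$, define for $\tau\ge 0$ and $s\in[-1,1]$ $$\ell_-(\tau,s)=\cos\tau\,\sin\!\Big(\tau\eta s-\tfrac{\pi}{p}\Big)+s\sin\tau\,\cos\!\Big(\tau\eta s-\tfrac{\pi}{p}\Big),$$ and let $\tau_\ell^-(s)$ be the smallest positive root in $\tau$ of $\ell_-(\tau,s)=0$. *)

From Stdlib Require Import Reals.
Open Scope R_scope.

Definition ell_minus (p : nat) (eta tau s : R) : R :=
  cos tau * sin (tau * eta * s - PI / INR p)
  + s * sin tau * cos (tau * eta * s - PI / INR p).

Definition smallest_pos_root (f : R -> R) (t : R) : Prop :=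
  0 < t /\ f t = 0 /\ (forall u, 0 < u < t -> f u <> 0).

(* Since [ell_minus p eta 0 s = - sin (PI / p) < 0], the smallest positive root
   is the first time [ell_minus p eta . s] reaches [0]; it exists because the
   function is already nonnegative at some [T <= PI / 2] with
   [T * eta * s <= PI / p].  In that window the phase [tau * eta * s - PI / p]
   lies in [[-PI / 2, 0]], where its sine and cosine increase, so
   [ell_minus p eta tau s] is strictly increasing in [s].  Hence for [s1 < s2],
   [ell_minus p eta . s2] is positive at or before [tau_ell^-(s1)]: either at
   [tau_ell^-(s1)] itself, or at the earlier time where its phase vanishes.
   The intermediate value theorem then puts [tau_ell^-(s2)] strictly earlier. *)

From Stdlib Require Import Reals Lra.
Open Scope R_scope.

Lemma continuity_pt_pos_near f x : continuity_pt f x -> 0 < f x ->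
  exists d, 0 < d /\ forall y, Rabs (y - x) < d -> 0 < f y.
Proof.
  intros Hc Hx.
  destruct (Hc (f x) Hx) as [d [Hd Hnear]].
  exists d; split; [exact Hd|]. intros y Hy.
  destruct (Req_dec y x) as [->|Hyx]; [exact Hx|].
  assert (Hdist : R_dist (f y) (f x) < f x)
    by (apply Hnear; split; [split; [exact I|auto]|exact Hy]).
  unfold R_dist in Hdist. apply Rabs_def2 in Hdist. lra.
Qed.

Lemma continuity_pt_neg_near f x : continuity_pt f x -> f x < 0 ->
  exists d, 0 < d /\ forall y, Rabs (y - x) < d -> f y < 0.
Proof.
  intros Hc Hx.
  destruct (continuity_pt_pos_near (- f)%F x (continuity_pt_opp _ _ Hc))
    as [d [Hd Hnear]]; [unfold opp_fct; lra|].
  exists d; split; [exact Hd|]. intros y Hy.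
  specialize (Hnear y Hy). unfold opp_fct in Hnear. lra.
Qed.

(* The root is the supremum of the [x] such that [f < 0] on [[0, x]]. *)
Lemma smallest_pos_root_exists f T : continuity f -> f 0 < 0 -> 0 < T ->
  0 <= f T -> exists t, smallest_pos_root f t.
Proof.
  intros Hc H0 HT HfT.
  set (E := fun x => x <= T /\ forall y, 0 <= y <= x -> f y < 0).
  assert (HE0 : E 0).
  { split; [lra|]. intros y Hy. replace y with 0 by lra. exact H0. }
  destruct (completeness E) as [t [Hub Hlub]].
  { exists T. intros x [Hx _]. exact Hx. }
  { exists 0. exact HE0. }
  assert (Ht0 : 0 <= t) by (apply Hub; exact HE0).
  assert (HtT : t <= T) by (apply Hlub; intros x [Hx _]; exact Hx).
  assert (Hneg : forall y, 0 <= y < t -> f y < 0).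
  { intros y Hy. apply Rnot_le_lt. intros Hfy.
    enough (t <= y) by lra.
    apply Hlub. intros x [_ Hx]. apply Rnot_lt_le. intros Hyx.
    specialize (Hx y ltac:(lra)). lra. }
  assert (Hft_le : f t <= 0).
  { apply Rnot_lt_le. intros Hpos.
    assert (Ht : 0 < t) by (destruct (Req_dec t 0) as [->|]; lra).
    destruct (continuity_pt_pos_near f t (Hc t) Hpos) as [d [Hd Hnear]].
    set (y := Rmax 0 (t - d / 2)).
    assert (0 <= y) by apply Rmax_l.
    assert (t - d / 2 <= y) by apply Rmax_r.
    assert (y < t) by (apply Rmax_lub_lt; lra).
    assert (0 < f y) by (apply Hnear; rewrite Rabs_left; lra).
    specialize (Hneg y ltac:(lra)). lra. }
  assert (Hft_ge : 0 <= f t).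
  { apply Rnot_lt_le. intros Hneg_t.
    assert (t < T) by (destruct (Req_dec t T) as [->|]; lra).
    destruct (continuity_pt_neg_near f t (Hc t) Hneg_t) as [d [Hd Hnear]].
    set (x := Rmin T (t + d / 2)).
    assert (x <= T) by apply Rmin_l.
    assert (x <= t + d / 2) by apply Rmin_r.
    assert (t < x) by (apply Rmin_glb_lt; lra).
    enough (E x) by (specialize (Hub x ltac:(assumption)); lra).
    split; [assumption|]. intros y Hy.
    destruct (Rlt_or_le y t); [apply Hneg; lra|].
    apply Hnear. rewrite Rabs_right; lra. }
  exists t. split; [|split; [lra|]].
  - destruct (Req_dec t 0) as [->|]; lra.
  - intros u Hu. specialize (Hneg u ltac:(lra)). lra.
Qed.

Lemma smallest_pos_root_le_root f t z :
  smallest_pos_root f t -> 0 < z -> f z = 0 -> t <= z.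
Proof.
  intros [_ [_ Hmin]] Hz Hfz.
  apply Rnot_lt_le. intros Hzt. exact (Hmin z (conj Hz Hzt) Hfz).
Qed.

Lemma smallest_pos_root_lt f T t : continuity f -> f 0 < 0 -> 0 < T ->
  0 < f T -> smallest_pos_root f t -> t < T.
Proof.
  intros Hc H0 HT HfT Ht.
  destruct (IVT f 0 T Hc HT H0 HfT) as [z [Hz Hfz]].
  assert (z <> 0) by (intros ->; lra).
  assert (z <> T) by (intros ->; lra).
  enough (t <= z) by lra.
  apply (smallest_pos_root_le_root f); [exact Ht|lra|exact Hfz].
Qed.

Lemma smallest_pos_root_le f T t : continuity f -> f 0 < 0 -> 0 < T ->
  0 <= f T -> smallest_pos_root f t -> t <= T.
Proof.
  intros Hc H0 HT HfT Ht.
  destruct (Rle_lt_or_eq_dec _ _ HfT) as [Hpos|Hzero].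
  - left. exact (smallest_pos_root_lt f T t Hc H0 HT Hpos Ht).
  - exact (smallest_pos_root_le_root f t T Ht HT (eq_sym Hzero)).
Qed.

Lemma sin_cos_increasing_neg_quadrant x y : - (PI / 2) <= x -> x < y -> y <= 0 ->
  sin x < sin y /\ cos x < cos y.
Proof.
  intros Hx Hxy Hy. pose proof PI_RGT_0. split.
  - apply sin_increasing_1; lra.
  - rewrite <- (cos_neg x), <- (cos_neg y). apply cos_decreasing_1; lra.
Qed.

Lemma ell_minus_continuous p eta s : continuity (fun tau => ell_minus p eta tau s).
Proof. unfold ell_minus. reg. Qed.

Section EllMinus.
Variables (p : nat) (eta : R).
Hypotheses (hp : (2 <= p)%nat) (heta : 0 < eta).
Let a := PI / INR p.

Lemma PI_div_INR_bounds : 0 < a /\ a <= PI / 2.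
Proof.
  assert (Hp : 2 <= INR p) by (apply (le_INR 2); exact hp).
  pose proof PI_RGT_0. unfold a. split.
  - apply Rdiv_lt_0_compat; lra.
  - apply Rmult_le_compat_l; [lra|]. apply Rinv_le_contravar; lra.
Qed.

Lemma ell_minus_at_0 s : ell_minus p eta 0 s < 0.
Proof.
  unfold ell_minus. rewrite cos_0, sin_0.
  replace (0 * eta * s - PI / INR p) with (- a) by (unfold a; ring).
  destruct PI_div_INR_bounds. pose proof PI_RGT_0.
  assert (sin (- a) < 0) by (apply sin_lt_0_var; lra). lra.
Qed.

Lemma ell_minus_at_phase_zero tau s : tau * eta * s = a ->
  ell_minus p eta tau s = s * sin tau.
Proof.
  intros Hphase. unfold ell_minus. fold a.
  rewrite Hphase, Rminus_diag, sin_0, cos_0. ring.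
Qed.

Lemma ell_minus_at_PI2 s :
  ell_minus p eta (PI / 2) s = s * cos (PI / 2 * eta * s - a).
Proof. unfold ell_minus. fold a. rewrite cos_PI2, sin_PI2. ring. Qed.

Lemma ell_minus_increasing_in_s tau s1 s2 : 0 < tau <= PI / 2 ->
  0 <= s1 -> s1 < s2 -> tau * eta * s2 <= a ->
  ell_minus p eta tau s1 < ell_minus p eta tau s2.
Proof.
  intros Htau Hs1 Hs12 Hwindow.
  destruct PI_div_INR_bounds as [Ha0 HaPI]. pose proof PI_RGT_0.
  unfold ell_minus. fold a.
  assert (Hphase : tau * eta * s1 < tau * eta * s2).
  { apply Rmult_lt_compat_l; [apply Rmult_lt_0_compat|]; lra. }
  assert (0 <= tau * eta * s1) by (apply Rmult_le_pos; [nra|lra]).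
  destruct (sin_cos_increasing_neg_quadrant
              (tau * eta * s1 - a) (tau * eta * s2 - a)) as [Hsin Hcos]; [lra..|].
  assert (0 <= cos (tau * eta * s1 - a)) by (apply cos_ge_0; lra).
  assert (0 <= cos tau) by (apply cos_ge_0; lra).
  assert (0 < sin tau) by (apply sin_gt_0; lra).
  assert (cos tau * sin (tau * eta * s1 - a) <= cos tau * sin (tau * eta * s2 - a))
    by (apply Rmult_le_compat_l; lra).
  assert (s1 * cos (tau * eta * s1 - a) < s2 * cos (tau * eta * s2 - a)) by nra.
  nra.
Qed.

Lemma ell_minus_nonneg_within_phase s : 0 <= s ->
  exists T, 0 < T <= PI / 2 /\ T * eta * s <= a /\ 0 <= ell_minus p eta T s.
Proof.
  intros Hs. destruct PI_div_INR_bounds as [Ha0 HaPI]. pose proof PI_RGT_0.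
  destruct (Rle_or_lt (PI / 2 * eta * s) a) as [Hwindow|Hbeyond].
  - exists (PI / 2). split; [lra|split; [exact Hwindow|]].
    rewrite ell_minus_at_PI2.
    assert (0 <= PI / 2 * eta * s) by (apply Rmult_le_pos; [nra|lra]).
    assert (0 <= cos (PI / 2 * eta * s - a)) by (apply cos_ge_0; lra).
    nra.
  - assert (s <> 0) by (intros ->; rewrite Rmult_0_r in Hbeyond; lra).
    assert (Hes : 0 < eta * s) by (apply Rmult_lt_0_compat; lra).
    exists (a / (eta * s)).
    assert (Hphase : a / (eta * s) * eta * s = a) by (field; lra).
    assert (0 < a / (eta * s)) by (apply Rdiv_lt_0_compat; lra).
    assert (a / (eta * s) < PI / 2) by (apply Rmult_lt_reg_r with (eta * s); nra).
    split; [lra|split; [lra|]].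
    rewrite ell_minus_at_phase_zero by exact Hphase.
    assert (0 < sin (a / (eta * s))) by (apply sin_gt_0; lra). nra.
Qed.

Lemma tau_ell_minus_exists s : 0 <= s ->
  exists t, smallest_pos_root (fun tau => ell_minus p eta tau s) t.
Proof.
  intros Hs. destruct (ell_minus_nonneg_within_phase s Hs) as [T [HT [_ HfT]]].
  apply (smallest_pos_root_exists _ T (ell_minus_continuous p eta s) (ell_minus_at_0 s));
    [lra|exact HfT].
Qed.

Lemma tau_ell_minus_within_phase s t : 0 <= s ->
  smallest_pos_root (fun tau => ell_minus p eta tau s) t ->
  t <= PI / 2 /\ t * eta * s <= a.
Proof.
  intros Hs Ht.
  destruct (ell_minus_nonneg_within_phase s Hs) as [T [HT [HTa HfT]]].
  assert (t <= T).
  { apply (smallest_pos_root_le _ T t (ell_minus_continuous p eta s) (ell_minus_at_0 s));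
      [lra|exact HfT|exact Ht]. }
  split; [lra|].
  enough (t * eta * s <= T * eta * s) by lra.
  apply Rmult_le_compat_r; [exact Hs|]. apply Rmult_le_compat_r; lra.
Qed.

Lemma tau_ell_minus_decreasing s1 s2 t1 t2 : 0 <= s1 -> s1 < s2 ->
  smallest_pos_root (fun tau => ell_minus p eta tau s1) t1 ->
  smallest_pos_root (fun tau => ell_minus p eta tau s2) t2 -> t2 < t1.
Proof.
  intros Hs1 Hs12 Ht1 Ht2.
  destruct PI_div_INR_bounds as [Ha0 HaPI]. pose proof PI_RGT_0.
  destruct (tau_ell_minus_within_phase s1 t1 Hs1 Ht1) as [Ht1PI Ht1a].
  pose proof Ht1 as [Ht1pos [Hroot1 _]].
  assert (Hes2 : 0 < eta * s2) by nra.
  assert (Hpos : exists tp, 0 < tp <= t1 /\ 0 < ell_minus p eta tp s2).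
  { destruct (Rlt_or_le (a / (eta * s2)) t1) as [Hearly|Hlate].
    - exists (a / (eta * s2)).
      assert (0 < a / (eta * s2)) by (apply Rdiv_lt_0_compat; lra).
      split; [lra|].
      rewrite ell_minus_at_phase_zero by (field; lra).
      assert (0 < sin (a / (eta * s2))) by (apply sin_gt_0; lra). nra.
    - exists t1. split; [lra|].
      rewrite <- Hroot1. apply ell_minus_increasing_in_s; [lra|lra|lra|].
      apply Rmult_le_compat_r with (r := eta * s2) in Hlate; [|lra].
      replace (a / (eta * s2) * (eta * s2)) with a in Hlate by (field; lra). lra. }
  destruct Hpos as [tp [Htp Hftp]].
  enough (t2 < tp) by lra.
  exact (smallest_pos_root_lt _ tp t2 (ell_minus_continuous p eta s2)
           (ell_minus_at_0 s2) ltac:(lra) Hftp Ht2).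
Qed.

End EllMinus.

Theorem mainTheorem6 (p : nat) (eta : R) (hp : (2 <= p)%nat) (heta : 0 < eta) :
  (forall s, 0 <= s <= 1 ->
     exists t, smallest_pos_root (fun tau => ell_minus p eta tau s) t) /\
  (forall s1 s2 t1 t2, 0 <= s1 -> s1 < s2 -> s2 <= 1 ->
     smallest_pos_root (fun tau => ell_minus p eta tau s1) t1 ->
     smallest_pos_root (fun tau => ell_minus p eta tau s2) t2 ->
     t2 < t1).
Proof.
  split.
  - intros s Hs. exact (tau_ell_minus_exists p eta hp heta s (proj1 Hs)).
  - intros s1 s2 t1 t2 Hs1 Hs12 _.
    exact (tau_ell_minus_decreasing p eta hp heta s1 s2 t1 t2 Hs1 Hs12).
Qed.
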